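(* Let $q\in Q_{\rm safe}$, $a\in A$, $x\in q$ and $p_v\in\mathcal P_v$, and define $\gamma_{x,a}\in\mathcal D(Q)$ by $\gamma_{x,a}(q'):=T^{a}_{p_v}(q'\mid x)$ for all $q'\in Q$. Then $\gamma_{x,a}\in\Gamma_{q,a}$.
   Context: Fix $n\ge1$, $s\ge1$, $\varepsilon\ge0$. Let $U=\{1,\dots,m\}$ be a finite set of modes, and for each $u\in U$ let $f_u:\mathbb R^n\to\mathbb R^n$ be continuous. $\mathcal D(Y)$ denotes the Borel probability measures on $Y$, and $\mathcal D_s(\mathbb R^n)$ those with finite $s$-th moment. $\mathcal W_s$ is the $s$-Wasserstein distance on $\mathcal D_s(\mathbb R^n)$ induced by the Euclidean norm $\|\cdot\|$. Let $\widehat p_v\in\mathcal D_s(\mathbb R^n)$ be a nominal distribution and set $\mathcal P_v:=\{p\in\mathcal D_s(\mathbb R^n):\mathcal W_s(p,\widehat p_v)\le\varepsilon\}$. For a distribution $p_v$ on $\mathbb R^n$, $u\in U$, $x\in\mathbb R^n$ and Borel $B$, let $T^u_{p_v}(B\mid x):=p_v(\{v: f_u(x)+v\in B\})$. Abstraction. Let $X\subset\mathbb R^n$ be a bounded Borel set and $X_{\rm tgt}\subset X$. Let $Q_{\rm safe}$ be a finite family of pairwise disjoint Borel sets whose union is $X$, each of which is either contained in $X_{\rm tgt}$ or disjoint from it. Let $Q_{\rm tgt}$ be the members of $Q_{\rm safe}$ contained in $X_{\rm tgt}$, let $q_u:=\mathbb R^n\setminus X$, $Q:=Q_{\rm safe}\cup\{q_u\}$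 (a finite partition of $\mathbb R^n$), and $A:=U$. Let $\underline P,\overline P:Q\times A\times Q\to[0,1]$ satisfy $\underline P\le\overline P$ and $\sum_{q'}\underline P(q,a,q')\le1\le\sum_{q'}\overline P(q,a,q')$, with $\underline P(q,a,q')\le\inf_{x\in q}T^a_{\widehat p_v}(q'\mid x)$ and $\overline P(q,a,q')\ge\sup_{x\in q}T^a_{\widehat p_v}(q'\mid x)$ for all $q\in Q_{\rm safe}$, $a\in A$, $q'\in Q$, and $\underline P(q_u,a,q_u)=\overline P(q_u,a,q_u)=1$. Put $\widehat\Gamma_{q,a}:=\{\gamma\in\mathcal D(Q):\underline P(q,a,q')\le\gamma(q')\le\overline P(q,a,q')\ \forall q'\}$. Define the cost $c(q,q'):=\inf\{\|x-y\|^s:x\in q,y\in q'\}$ and, for $\gamma,\gamma'\in\mathcal D(Q)$, $\mathcal T_c(\gamma,\gamma'):=\min_{\pi}\sum_{q,q'}c(q,q')\pi(q,q')$, where the minimum is over couplings $\pi$ of $\gamma$ and $\gamma'$. For $q\in Q_{\rm safe}$ and $a\in A$ let $\Gamma_{q,a}:=\{\gamma\in\mathcal D(Q):\exists\widehat\gamma\in\widehat\Gamma_{q,a},\ \mathcal T_c(\gamma,\widehat\gamma)\le\varepsilon^s\}$, and let $\Gamma_{q_u,a}:=\widehat\Gamma_{q_u,a}$. *)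

From HB Require Import structures.
From mathcomp Require Import all_boot all_order all_algebra.
From mathcomp Require Import all_classical all_reals all_analysis.
Set Implicit Arguments. Unset Strict Implicit. Unset Printing Implicit Defensive.
Import Order.TTheory GRing.Theory Num.Theory.
Import numFieldNormedType.Exports.
Local Open Scope classical_set_scope.
Local Open Scope ring_scope.

(* R^n is 'rV[R]_n; its (library) topology is the product/max-norm topology,
   which coincides with the Euclidean one. *)

Definition enorm (R : realType) (n : nat) (x : 'rV[R]_n) : R :=
  Num.sqrt (\sum_(i < n) x ord0 i ^+ 2).

Definition Rn (R : realType) (n : nat) :=
  g_sigma_algebraType (@open 'rV[R]_n).

Definition edist (R : realType) (n : nat) (x y : 'rV[R]_n) : R := enorm (x - y).

Definition finite_moment (R : realType) (n : nat) (s : R)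
    (p : probability (Rn R n) R) : Prop :=
  (\int[p]_x ((enorm (x : 'rV[R]_n)) `^ s)%:E < +oo)%E.

Definition couplings (R : realType) (n : nat) (p q : probability (Rn R n) R)
  : set (probability (Rn R n * Rn R n)%type R) :=
  [set pi | (forall A : set (Rn R n), measurable A -> pi (A `*` setT) = p A) /\
            (forall B : set (Rn R n), measurable B -> pi (setT `*` B) = q B)].

Definition Wass (R : realType) (n : nat) (s : R) (p q : probability (Rn R n) R)
  : \bar R :=
  ((ereal_inf [set \int[pi]_z ((edist z.1 z.2) `^ s)%:E | pi in couplings p q])
     `^ s^-1)%E.

Definition Tker (R : realType) (n : nat) (pv : probability (Rn R n) R)
    (fu : 'rV[R]_n -> 'rV[R]_n) (B : set 'rV[R]_n) (x : 'rV[R]_n) : R :=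
  fine (pv [set v : Rn R n | B (fu x + v)]).

Definition is_distr (R : realType) (Q : finType) (g : Q -> R) : Prop :=
  (forall q, 0 <= g q) /\ \sum_(q : Q) g q = 1.

Definition dcoupling (R : realType) (Q : finType) (g g' : Q -> R)
    (pi : Q -> Q -> R) : Prop :=
  (forall q q', 0 <= pi q q') /\
  (forall q, \sum_(q' : Q) pi q q' = g q) /\
  (forall q', \sum_(q : Q) pi q q' = g' q').

Definition cellcost (R : realType) (n : nat) (s : R) (A B : set 'rV[R]_n) : R :=
  inf [set r | exists x y, A x /\ B y /\ r = (edist x y) `^ s].

(* optimal transport cost T_c(g, g') (the min over couplings, written as inf) *)
Definition Tc (R : realType) (Q : finType) (c : Q -> Q -> R) (g g' : Q -> R) : R :=
  inf [set \sum_(q : Q) \sum_(q' : Q) c q q' * pi q q' | pi in dcoupling g g'].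

Definition Gammahat (R : realType) (Q A : finType) (Pl Pu : Q -> A -> Q -> R)
    (q : Q) (a : A) : set (Q -> R) :=
  [set g | is_distr g /\ forall q', Pl q a q' <= g q' <= Pu q a q'].

(* Gamma_{q,a}; qu is the unsafe cell *)
Definition Gamma (R : realType) (n : nat) (s eps : R) (Q A : finType)
    (cell : Q -> set 'rV[R]_n) (qu : Q) (Pl Pu : Q -> A -> Q -> R)
    (q : Q) (a : A) : set (Q -> R) :=
  if q == qu then Gammahat Pl Pu q a
  else [set g | is_distr g /\
          exists2 gh, Gammahat Pl Pu q a gh &
            Tc (fun q1 q2 => cellcost s (cell q1) (cell q2)) g gh <= eps `^ s].

From Pilot Require Import Defs.
From HB Require Import structures.
From mathcomp Require Import all_boot all_order all_algebra.
From mathcomp Require Import all_classical all_reals all_analysis.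
From mathcomp Require Import measurable_realfun.
Set Implicit Arguments.
Unset Strict Implicit.
Unset Printing Implicit Defensive.

Import Order.TTheory GRing.Theory Num.Theory.
Import numFieldNormedType.Exports.
Local Open Scope classical_set_scope.
Local Open Scope ring_scope.

(* The cells partition R^n, so their translates A_q' = {v | f_a(x) + v \in q'}
   partition the noise space, with gamma(q') = p_v(A_q') and
   gammahat(q') = phat_v(A_q') in Gammahat_{q,a}.  If pi couples p_v and phat_v
   with cost int |v - w|^s dpi < eps^s + e, the masses pi(A_q1 x A_q2) couple
   gamma and gammahat, and since c(q1, q2) <= |v - w|^s on A_q1 x A_q2
   (translation invariance), their c-cost is at most that integral.  Hence
   T_c(gamma, gammahat) <= eps^s + e for every e > 0. *)

Section finite_partition.
Context d (T : measurableType d) (R : realType) (I : finType).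

Lemma measure_fin_bigcupT (mu : {measure set T -> \bar R}) (F : I -> set T) :
  (forall i, measurable (F i)) -> trivIset setT F ->
  mu (\bigcup_i F i) = (\sum_(i : I) mu (F i))%E.
Proof.
move=> mF tF; rewrite measure_fin_bigcup//; last exact: finite_finset.
rewrite (fsbigE (enum I)) ?enum_uniq//; last by move=> i _; rewrite mem_enum.
by rewrite big_enum_cond /=; apply: eq_bigl => i; rewrite in_setT.
Qed.

Lemma sum_fine_probability (p : probability T R) (F : I -> set T) :
  (forall i, measurable (F i)) -> trivIset setT F ->
  \sum_(i : I) fine (p (F i)) = fine (p (\bigcup_i F i)).
Proof.
move=> mF tF; rewrite measure_fin_bigcupT// sum_fine// => i _.
exact: fin_num_measure.
Qed.

(* Unlike [ge0_le_integral], no measurability is needed. *)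
Lemma ge0_le_integralT (mu : {measure set T -> \bar R}) (f g : T -> \bar R) :
  (forall t, 0 <= f t)%E -> (forall t, f t <= g t)%E ->
  (\int[mu]_t f t <= \int[mu]_t g t)%E.
Proof.
move=> f0 fg; have g0 t : (0 <= g t)%E by exact: le_trans (f0 t) (fg t).
rewrite !ge0_integralTE//; apply: ereal_sup_le => _ [h hf <-].
by exists h => //= t; exact: le_trans (hf t) (fg t).
Qed.

Variable G : I -> set T.
Hypotheses (mG : forall i, measurable (G i)) (tG : trivIset setT G)
  (covG : forall t, exists i, G i t).

Lemma partition_bigcup : \bigcup_i G i = setT.
Proof. by apply/seteqP; split => // t _; have [i Git] := covG t; exists i. Qed.

Lemma partition_is_distr (p : probability T R) : is_distr (fun i => fine (p (G i))).
Proof.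
split=> [i|]; first by apply: fine_ge0; exact: measure_ge0.
by rewrite sum_fine_probability// partition_bigcup probability_setT.
Qed.

Lemma partition_sum_indic (h : I -> R) i t : G i t ->
  \sum_(j : I) h j * \1_(G j) t = h i.
Proof.
move=> Git; rewrite (bigD1 i)//= big1 ?addr0; first by rewrite indicE mem_set ?mulr1.
move=> j ji; rewrite indicE memNset ?mulr0// => Gjt.
by move/negP: ji; apply; apply/eqP; apply tG => //; exists t.
Qed.

Lemma partition_sum_le_integral (mu : {measure set T -> \bar R}) (c : I -> R)
    (C : T -> \bar R) :
  (forall i, 0 <= c i) -> (forall i t, G i t -> (c i)%:E <= C t)%E ->
  (\sum_(i : I) (c i)%:E * mu (G i) <= \int[mu]_t C t)%E.
Proof.
move=> c0 cC.
have mcG i : measurable_fun [set: T] (fun t => ((c i * \1_(G i) t)%:E : \bar R)).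
  by apply/measurable_EFinP; apply: measurable_funM => //; exact: measurable_indic.
have cG0 i t : (0 <= (c i * \1_(G i) t)%:E)%E by rewrite lee_fin mulr_ge0.
rewrite (eq_bigr (fun i => \int[mu]_t (c i * \1_(G i) t)%:E)%E); last first.
  move=> i _; rewrite (@integralZl_indic _ _ _ mu setT measurableT (fun=> G i))//.
  - by rewrite integral_indic// setIT.
  - by move=> /lt_geF; rewrite c0.
rewrite -ge0_integral_sum//.
apply: ge0_le_integralT => [t|t]; first exact: sume_ge0.
have [i Git] := covG t.
by rewrite sumEFin (partition_sum_indic c Git); exact: cC.
Qed.

End finite_partition.

Section partition_coupling.
Context d (T : measurableType d) (R : realType) (I : finType) (G : I -> set T).
Hypotheses (mG : forall i, measurable (G i)) (tG : trivIset setT G)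
  (covG : forall t, exists i, G i t).

Let GX (ij : I * I) : set (T * T) := G ij.1 `*` G ij.2.

Let mGX ij : measurable (GX ij). Proof. exact: measurableX. Qed.

Let tGX : trivIset setT GX.
Proof.
move=> [i j] [i' j'] _ _ [[v w] [[/= Giv Gjw] [/= Gi'v Gj'w]]].
by congr pair; [apply tG => //; exists v | apply tG => //; exists w].
Qed.

Let covGX z : exists ij, GX ij z.
Proof. by have [i Gi] := covG z.1; have [j Gj] := covG z.2; exists (i, j). Qed.

Lemma partition_dcoupling (p p' : probability T R) (pi : probability (T * T)%type R) :
  (forall A, measurable A -> pi (A `*` setT) = p A) ->
  (forall B, measurable B -> pi (setT `*` B) = p' B) ->
  dcoupling (fun i => fine (p (G i))) (fun i => fine (p' (G i)))
    (fun i j => fine (pi (G i `*` G j))).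
Proof.
move=> pi1 pi2; split; first by move=> i j; apply: fine_ge0; exact: measure_ge0.
split=> [i|j].
- rewrite (sum_fine_probability pi (fun j => mGX (i, j))); last first.
    by move=> j j' _ _ [[v w] [[_ Gjw] [_ Gj'w]]]; apply tG => //; exists w.
  rewrite -pi1//; congr (fine (pi _)); apply/seteqP; split=> [[v w] [j _ []]//|].
  by move=> [v w] [Giv _]; have [j Gjw] := covG w; exists j.
- rewrite (sum_fine_probability pi (fun i => mGX (i, j))); last first.
    by move=> i i' _ _ [[v w] [[Giv _] [Gi'v _]]]; apply tG => //; exists v.
  rewrite -pi2//; congr (fine (pi _)); apply/seteqP; split=> [[v w] [i _ []]//|].
  by move=> [v w] [_ Gjw]; have [i Giv] := covG v; exists i.
Qed.

Lemma partition_coupling_cost_le (pi : probability (T * T)%type R) (c : I -> I -> R)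
    (C : T -> T -> \bar R) :
  (forall i j, 0 <= c i j) ->
  (forall i j v w, G i v -> G j w -> (c i j)%:E <= C v w)%E ->
  ((\sum_(i : I) \sum_(j : I) c i j * fine (pi (G i `*` G j)))%:E
     <= \int[pi]_z C z.1 z.2)%E.
Proof.
move=> c0 cC; rewrite pair_big /= -sumEFin.
under eq_bigr => ij _ do rewrite EFinM (fineK (fin_num_measure pi _ (mGX ij))).
apply: (partition_sum_le_integral mGX tGX covGX pi (c := fun ij => c ij.1 ij.2))
  => [[i j]|[i j] [v w] [/= Giv Gjw]].
- exact: c0.
- exact: cC.
Qed.

End partition_coupling.

Lemma trivIset_preimage (aT rT I : Type) (D : set I) (h : aT -> rT) (F : I -> set rT) :
  trivIset D F -> trivIset D (fun i => h @^-1` F i).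
Proof. by move=> tF i j Di Dj [t [Fi Fj]]; apply tF => //; exists (h t). Qed.

Section cells.
Context (T : Type) (Q : finType) (X : set T) (cell : Q -> set T) (qu : Q).
Hypotheses (X_cells : forall x, X x <-> exists2 q, q != qu & cell q x)
  (cell_qu : cell qu = ~` X).

Lemma cells_cover y : exists q, cell q y.
Proof.
have [/X_cells[q _ cqy]|nXy] := pselect (X y); first by exists q.
by exists qu; rewrite cell_qu.
Qed.

Lemma cells_trivIset :
  (forall q q', q != qu -> q' != qu -> q != q' -> cell q `&` cell q' = set0) ->
  trivIset setT cell.
Proof.
move=> disj q q' _ _ [y [cqy cq'y]].
have safe_cell r : r != qu -> cell r y -> X y by move=> rqu cry; apply/X_cells; exists r.
have unsafe_cell : cell qu y -> ~ X y by rewrite cell_qu.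
case: (eqVneq q qu) cqy => [-> cquy|qqu cqy];
  case: (eqVneq q' qu) cq'y => [-> cquy'|q'qu cq'y] //.
- by case: (unsafe_cell cquy); exact: safe_cell cq'y.
- by case: (unsafe_cell cquy'); exact: safe_cell cqy.
- have [//|/(disj _ _ qqu q'qu) cap0] := eqVneq q q'.
  by have : (cell q `&` cell q') y by []; rewrite cap0.
Qed.

End cells.

Lemma measurable_translate (R : realType) (n : nat) (c : 'rV[R]_n) (A : set (Rn R n)) :
  measurable A -> measurable [set v : Rn R n | A (c + v)].
Proof.
move=> mA.
have mf : measurable_fun [set: Rn R n] (fun v : Rn R n => (c + v : Rn R n)).
  apply: (@measurability _ _ (Rn R n) (Rn R n) setT _ (@open 'rV[R]_n)) => //.
  move=> _ [B oB <-]; rewrite setTI; apply: sub_sigma_algebra.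
  have hc : continuous (fun v : 'rV[R]_n => c + v).
    by move=> v; apply: continuousD => //; exact: cst_continuous.
  exact: open_comp (fun v _ => hc v) oB.
by have := mf measurableT A mA; rewrite setTI.
Qed.

Lemma edist_translate (R : realType) (n : nat) (c v w : 'rV[R]_n) :
  Defs.edist (c + v) (c + w) = Defs.edist v w.
Proof. by rewrite /Defs.edist [c + v]addrC addrKA. Qed.

Lemma cellcost_ge0 (R : realType) (n : nat) (s : R) (A B : set 'rV[R]_n) :
  0 <= cellcost s A B.
Proof.
rewrite /cellcost; set S := [set r | _].
have [[r Sr]|S0] := pselect (S !=set0).
  by apply: lb_le_inf; [exists r | move=> _ [x [y [_ [_ ->]]]]; exact: powR_ge0].
suff -> : S = set0 by rewrite inf0.
by apply/seteqP; split => // r Sr; apply: S0; exists r.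
Qed.

Lemma cellcost_le (R : realType) (n : nat) (s : R) (A B : set 'rV[R]_n) x y :
  A x -> B y -> cellcost s A B <= Defs.edist x y `^ s.
Proof.
move=> Ax By; apply: ge_inf; last by exists x, y.
by exists 0 => _ [x' [y' [_ [_ ->]]]]; exact: powR_ge0.
Qed.

Lemma Tc_le_dcoupling (R : realType) (Q : finType) (c : Q -> Q -> R) (g g' : Q -> R)
    (pi : Q -> Q -> R) :
  (forall q q', 0 <= c q q') -> dcoupling g g' pi ->
  Tc c g g' <= \sum_(q : Q) \sum_(q' : Q) c q q' * pi q q'.
Proof.
move=> c0 gpi; apply: ge_inf; last by exists pi.
exists 0 => _ [pi' [pi'0 _] <-]; apply: sumr_ge0 => q _; apply: sumr_ge0 => q' _.
exact: mulr_ge0.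
Qed.

Lemma Wass_near_coupling (R : realType) (n : nat) (s eps : R)
    (p p' : probability (Rn R n) R) :
  0 < s -> 0 <= eps -> (Wass s p p' <= eps%:E)%E ->
  forall e, 0 < e -> exists2 pi, couplings p p' pi &
    (\int[pi]_z (Defs.edist z.1 z.2 `^ s)%:E < (eps `^ s + e)%:E)%E.
Proof.
move=> s0 eps0 W_le e e0.
set S := [set \int[pi]_z (Defs.edist z.1 z.2 `^ s)%:E | pi in couplings p p']%E.
have S_ge0 : (0 <= ereal_inf S)%E.
  apply: le_ereal_inf_tmp => _ [pi _ <-]; apply: integral_ge0 => z _.
  by rewrite lee_fin powR_ge0.
have infS_le : (ereal_inf S <= (eps `^ s)%:E)%E.
  move: W_le S_ge0; rewrite /Wass -/S; case: (ereal_inf S) => [r| |]//=.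
    rewrite !lee_fin => r_le r0.
    rewrite -[r]powRr1// -[1](@mulVf _ s) ?gt_eqF// powRrM.
    by apply: ge0_ler_powR r_le; rewrite ?nnegrE ?powR_ge0// ltW.
  by rewrite invr_eq0 gt_eqF.
have /ereal_inf_lt[_ [pi pi_coupling <-] pi_cost] : (ereal_inf S < (eps `^ s + e)%:E)%E.
  by apply: le_lt_trans infS_le _; rewrite lte_fin ltrDl.
by exists pi.
Qed.

Theorem proposition1 (R : realType) (n : nat) (s eps : R)
  (U : finType) (f : U -> 'rV[R]_n -> 'rV[R]_n)
  (phat : probability (Rn R n) R)
  (X Xtgt : set 'rV[R]_n) (Q : finType) (cell : Q -> set 'rV[R]_n) (qu : Q)
  (Pl Pu : Q -> U -> Q -> R) :
  (0 < n)%N -> 1 <= s -> 0 <= eps ->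
  (forall u, continuous (f u)) ->
  finite_moment s phat ->
  (* abstraction *)
  measurable (X : set (Rn R n)) ->
  (exists M : R, forall x, X x -> enorm x <= M) ->
  Xtgt `<=` X ->
  (forall q, q != qu -> measurable (cell q : set (Rn R n))) ->
  (forall q, q != qu -> cell q !=set0) ->
  (forall q q', q != qu -> q' != qu -> q != q' -> cell q `&` cell q' = set0) ->
  (forall x, X x <-> exists2 q, q != qu & cell q x) ->
  (forall q, q != qu -> cell q `<=` Xtgt \/ cell q `&` Xtgt = set0) ->
  cell qu = ~` X ->
  (* interval transition bounds *)
  (forall q a q', 0 <= Pl q a q' /\ Pl q a q' <= Pu q a q' /\ Pu q a q' <= 1) ->
  (forall q a, \sum_(q' : Q) Pl q a q' <= 1 <= \sum_(q' : Q) Pu q a q') ->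
  (forall q a q', q != qu -> forall x, cell q x ->
     Pl q a q' <= Tker phat (f a) (cell q') x <= Pu q a q') ->
  (forall a, Pl qu a qu = 1 /\ Pu qu a qu = 1) ->
  forall (q : Q) (a : U) (x : 'rV[R]_n) (pv : probability (Rn R n) R),
    q != qu -> cell q x ->
    finite_moment s pv -> (Wass s pv phat <= eps%:E)%E ->
    Gamma s eps cell qu Pl Pu q a (fun q' => Tker pv (f a) (cell q') x).
Proof.
move=> _ s1 eps0 _ _ mX _ _ mcell _ disj X_cells _ cell_qu _ _ Phat_bounds _
  q a x pv qqu cqx _ W_le.
rewrite /Gamma (negbTE qqu).
pose A q' : set (Rn R n) := (fun v => f a x + v) @^-1` cell q'.
have mA q' : measurable (A q').
  apply: measurable_translate; have [->|/mcell//] := eqVneq q' qu.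
  by rewrite cell_qu; exact: measurableC mX.
have tA : trivIset setT A.
  by apply: trivIset_preimage; exact: cells_trivIset X_cells cell_qu disj.
have covA v : exists q', A q' v := cells_cover X_cells cell_qu (f a x + v).
split; first exact: (partition_is_distr mA tA covA pv).
exists (fun q' => Tker phat (f a) (cell q') x).
  split; first exact: (partition_is_distr mA tA covA phat).
  by move=> q'; exact: Phat_bounds qqu _ cqx.
apply/ler_addgt0Pr => e e0.
have [pi [pi1 pi2] pi_cost] :=
  Wass_near_coupling (lt_le_trans ltr01 s1) eps0 W_le e0.
have cost_ge0 i j : 0 <= cellcost s (cell i) (cell j) by exact: cellcost_ge0.
have Tc_le := Tc_le_dcoupling cost_ge0 (partition_dcoupling mA tA covA pi1 pi2).
apply: le_trans Tc_le _; rewrite -lee_fin; apply: le_trans (ltW pi_cost).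
apply: (partition_coupling_cost_le mA tA covA pi
  (C := fun v w => (Defs.edist v w `^ s)%:E) cost_ge0) => i j v w Aiv Ajw.
by rewrite lee_fin -(edist_translate (f a x)); exact: cellcost_le.
Qed.
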